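(* Let $(B,T)$ be an $n$-string tangle diagram which is adequate. Then the link diagram $L_T$ is adequate.
   Context: A link diagram is a generic projection of a link to $S^2$ with over/under information at each double point (crossing). At each crossing there are two ways to resolve: the $A$-resolution and the $A^{-1}$-resolution (Kauffman's convention: the $A$-resolution joins the two regions near the crossing that are swept out when the over-strand is rotated counterclockwise, and the $A^{-1}$-resolution joins the other two). Resolving every crossing by the $A$-resolution (resp. $A^{-1}$-resolution) yields a disjoint collection of circles called the all-$A$ (resp. all-$A^{-1}$) resolution; at each former crossing one records a grey segment joining the two arcs of the resolution that came from that crossing. A link diagram is $A$-adequate (resp. $A^{-1}$-adequate) if every grey segment of the all-$A$ (resp. all-$A^{-1}$) resolution has its two endpoints on distinct circles; it is adequate if it is both $A$-adequate and $A^{-1}$-adequate. An $n$-string tangle diagram $(B,T)$ is a diagram of a disk $B$ together with a set $T$ of $n$ arcs in $B$ (with crossings) whose $2n$ endpoints lie on $\partial B$ and are numbered $1,\dots,2n$ clockwise. It is adequate if, however the endpoints of $T$ are joined by pairwise disjoint planar arcs outside $B$, the resulting link diagram is adequate. Given $(B,T)$, let $(B^*,T^* )$ be its mirror image, with the endpoints of $T^*$ numbered $1,\dots,2n$ counterclockwise; $L_T$ is the link diagram obtained by gluing $B$ and $B^*$ along their boundaries so that endpoint $j$ of $T$ is attached to endpoint $j$ of $T^*$ for every $j$. *)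

From HB Require Import structures.
From mathcomp Require Import all_boot.
Set Implicit Arguments. Unset Strict Implicit. Unset Printing Implicit Defensive.

(* A (generalised) diagram has a finite set of darts (half-edge ends) and a  *)
(* finite set of crossings.  Each crossing c owns four darts                 *)
(* [slot c 0], [slot c 1], [slot c 2], [slot c 3], listed in COUNTERCLOCKWISE *)
(* order around c, with the convention that slots 0,2 lie on the            *)
(* under-strand and slots 1,3 on the over-strand (every crossing can be      *)
(* labelled this way).  [edge] is the involution joining the two ends of     *)
(* each edge of the diagram, and [pass] joins darts at 2-valent points       *)
(* (points where an edge simply passes through, e.g. glued tangle endpoints) *)
Record diagram := Diagram {
  dart : finType;
  cross : finType;
  slot : cross -> 'I_4 -> dart;
  edge : dart -> dart;
  pass : dart -> dart }.

(* Resolution at one crossing: b = true is Kauffman's A-resolution, which    *)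
(* (rotating the over-strand {1,3} counterclockwise sweeps the regions       *)
(* between slots 1,2 and between slots 3,0) joins slots 0-1 and 2-3;         *)
(* b = false is the A^{-1}-resolution, joining slots 1-2 and 3-0.            *)
Definition res_partner (b : bool) (k : 'I_4) : 'I_4 :=
  if b then (if odd k then ord_pred k else ordS k)
  else (if odd k then ordS k else ord_pred k).

Definition smooth (d : diagram) (s : cross d -> bool) (x : dart d) : dart d :=
  match [pick p : (cross d * 'I_4)%type | @slot d p.1 p.2 == x] with
  | Some p => @slot d p.1 (res_partner (s p.1) p.2)
  | None => @pass d x
  end.

Definition res_rel (d : diagram) (s : cross d -> bool) : rel (dart d) :=
  fun x y => (y == @edge d x) || (y == smooth s x).

Definition same_circle (d : diagram) (s : cross d -> bool) (x y : dart d) :=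
  connect (res_rel s) x y.

(* All-A resolution: the grey segment at c joins the arc {slot 0, slot 1}   *)
(* to the arc {slot 2, slot 3}.                                             *)
Definition s0 : 'I_4 := @inord 3 0.
Definition s1 : 'I_4 := @inord 3 1.
Definition s2 : 'I_4 := @inord 3 2.
Definition s3 : 'I_4 := @inord 3 3.

Definition A_adequate (d : diagram) : Prop :=
  forall c : cross d,
    ~~ same_circle (fun _ => true) (@slot d c s0) (@slot d c s2).

(* All-A^{-1} resolution: the grey segment at c joins the arc               *)
(* {slot 1, slot 2} to the arc {slot 3, slot 0}.                            *)
Definition Ainv_adequate (d : diagram) : Prop :=
  forall c : cross d,
    ~~ same_circle (fun _ => false) (@slot d c s1) (@slot d c s3).

Definition adequate (d : diagram) : Prop := A_adequate d /\ Ainv_adequate d.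

(* Darts: the four slots of each crossing (crossings in C) and the 2n        *)
(* endpoints on the boundary of B, indexed 0..2n-1 in CLOCKWISE order.       *)
Definition tdart (C : finType) (n : nat) : finType :=
  ((C * 'I_4) + 'I_(n.*2))%type.

Definition involutive_fpf (T : finType) (f : T -> T) : Prop :=
  (forall x, f (f x) = x) /\ (forall x, f x != x).

(* Rotation system of the graph obtained by collapsing the outside of B to  *)
(* a single vertex v_oo: counterclockwise at each crossing; around v_oo the *)
(* counterclockwise order is the clockwise order of the endpoints on dB.    *)
Definition trot (C : finType) (n : nat) (x : tdart C n) : tdart C n :=
  match x with
  | inl (c, k) => inl (c, ordS k)
  | inr j => inr (ordS j)
  end.

Definition trot_edge_rel (C : finType) (n : nat) (e : tdart C n -> tdart C n)
  : rel (tdart C n) :=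
  fun x y => (y == trot x) || (y == e x).

(* Planarity (genus 0 of every component, Euler's formula for the rotation  *)
(* system): #vertices - #edges + #faces = 2 #components.                    *)
Definition tplanar (C : finType) (n : nat) (e : tdart C n -> tdart C n) : Prop :=
  (fcard (@trot C n) predT + fcard (@trot C n \o e) predT)%N
  = ((#|tdart C n|)./2 + 2 * n_comp (trot_edge_rel e) predT)%N.

Definition tthrough (C : finType) (n : nat) (x : tdart C n) : tdart C n :=
  match x with
  | inl (c, k) => inl (c, ordS (ordS k))
  | inr j => inr j
  end.

Definition strand_rel (C : finType) (n : nat) (e : tdart C n -> tdart C n)
  : rel (tdart C n) :=
  fun x y => (y == e x) || (y == tthrough x).

Definition no_closed_component (C : finType) (n : nat)
  (e : tdart C n -> tdart C n) : Prop :=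
  forall c k, exists j : 'I_(n.*2), connect (strand_rel e) (inl (c, k)) (inr j).

Definition tangle_diagram (C : finType) (n : nat) (e : tdart C n -> tdart C n)
  : Prop :=
  [/\ involutive_fpf e, tplanar e & no_closed_component e].

(* A way of joining the 2n endpoints by pairwise disjoint planar arcs       *)
(* outside B: a non-crossing perfect matching of 'I_(2n).                   *)
Definition noncrossing_matching (n : nat) (m : 'I_(n.*2) -> 'I_(n.*2)) : Prop :=
  involutive_fpf m /\
  (forall i j : 'I_(n.*2), i < j < m i -> i < m j < m i).

Definition tclosure (C : finType) (n : nat) (e : tdart C n -> tdart C n)
  (m : 'I_(n.*2) -> 'I_(n.*2)) : diagram :=
  @Diagram (tdart C n) C
    (fun c k => inl (c, k))
    e
    (fun x => match x with inr j => inr (m j) | inl _ => x end).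

Definition tangle_adequate (C : finType) (n : nat) (e : tdart C n -> tdart C n)
  : Prop :=
  forall m, noncrossing_matching m -> adequate (tclosure e m).

(* The link diagram L_T.  The first copy of the darts is (B,T); the second  *)
(* copy is the mirror image of (B,T) (reflection of the disk, over/under     *)
(* information kept), so its counterclockwise slot order at each crossing   *)
(* is the reverse one: slot k of the mirror at c is the old slot -k (mod 4), which  *)
(* keeps slots 0,2 on the under-strand.  Endpoint j of T is glued to        *)
(* endpoint j of the mirror.                                                        *)
Definition neg4 (k : 'I_4) : 'I_4 := if odd k then ordS (ordS k) else k.

Definition LT (C : finType) (n : nat) (e : tdart C n -> tdart C n) : diagram :=
  @Diagram ((tdart C n) + (tdart C n))%type (C + C)%type
    (fun c k => match c with
                | inl c => inl (inl (c, k))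
                | inr c => inr (inl (c, neg4 k))
                end)
    (fun x => match x with inl y => inl (e y) | inr y => inr (e y) end)
    (fun x => match x with
              | inl (inr j) => inr (inr j)
              | inr (inr j) => inl (inr j)
              | _ => x
              end).

From mathcomp Require Import all_boot zify.
Set Implicit Arguments. Unset Strict Implicit. Unset Printing Implicit Defensive.

(* In the all-A state of L_T the half B carries the all-A state of T, while
   the mirror half B* carries its all-A^{-1} state, since mirroring exchanges
   the two resolutions; symmetrically for the all-A^{-1} state.  For each state
   choose a noncrossing closure of T in which all 2n endpoints lie on one
   circle.  It exists because every class of endpoints joined inside B has even
   size: match the last two endpoints and merge their classes, or, when they
   form a class of their own, nest them inside the pair of the preceding
   endpoint.  Collapsing B* to a point of that circle maps every circle of L_T
   through a crossing of B onto a circle of the closure, so a grey segment of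
   L_T with both ends on one circle gives one in a closure of (B,T), which is
   adequate.  Crossings of B* are handled alike after exchanging the halves. *)

Lemma connect_homo (T U : finType) (f : T -> U) (r : rel T) (r' : rel U) :
  (forall x y, r x y -> connect r' (f x) (f y)) ->
  forall x y, connect r x y -> connect r' (f x) (f y).
Proof.
move=> rr' x _ /connectP[p r_p ->]; elim: p x r_p => //= y p IHp x /andP[rxy /IHp].
exact: connect_trans (rr' _ _ rxy).
Qed.

Lemma odd_card_involution (T : finType) (f : T -> T) (A : {set T}) :
  involutive f -> {in A, forall x, f x \in A} ->
  odd #|A| = odd #|[set x in A | f x == x]|.
Proof.
move=> fK fA; set F := [set x | f x == x].
have fAE x : (f x \in A) = (x \in A) by apply/idP/idP => [/fA|/fA //]; rewrite fK.
have even_moved : ~~ odd #|A :\: F|.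
  have ord2 : A :\: F \subset order_set f 2.
    apply/subsetP => x; rewrite !inE => /andP[fx_x _]; apply/eqP.
    by apply: (@order_cycle _ f [:: x; f x]); rewrite /= ?inE ?fK ?eqxx ?andbT // eq_sym.
  have cl : fclosed f (A :\: F) by move=> x _ /eqP <-; rewrite !inE fK fAE eq_sym.
  by rewrite -(fcard_order_set (can_inj fK) ord2 cl) oddM andbF.
by rewrite -(cardsID F A) oddD (negbTE even_moved) addbF setIdE.
Qed.

Lemma res_partnerK b : involutive (res_partner b).
Proof. by move=> k; apply/val_inj; case: b; case: k => [[|[|[|[|]]]] ?]. Qed.

Lemma res_partner_neq b k : res_partner b k != k.
Proof. by case: b; case: k => [[|[|[|[|]]]] ?]. Qed.

Lemma neg4K : involutive neg4.
Proof. by move=> k; apply/val_inj; case: k => [[|[|[|[|]]]] ?]. Qed.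

Lemma neg4_res_partner b k : neg4 (res_partner b k) = res_partner (~~ b) (neg4 k).
Proof. by apply/val_inj; case: b; case: k => [[|[|[|[|]]]] ?]. Qed.

Lemma slotsE : [/\ s0 = Ordinal (isT : 0 < 4), s1 = Ordinal (isT : 1 < 4),
                   s2 = Ordinal (isT : 2 < 4) & s3 = Ordinal (isT : 3 < 4)].
Proof. by split; apply/val_inj; rewrite /= inordK. Qed.

Lemma neg4_slots : [/\ neg4 s0 = s0, neg4 s1 = s3, neg4 s2 = s2 & neg4 s3 = s1].
Proof. by have [-> -> -> ->] := slotsE; split; apply/val_inj. Qed.

Lemma res_partner_slots :
  [/\ res_partner true s0 = s1, res_partner true s2 = s3,
      res_partner false s0 = s3 & res_partner false s2 = s1].
Proof. by have [-> -> -> ->] := slotsE; split; apply/val_inj. Qed.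

Lemma connect_sym_res_rel (d : diagram) (s : cross d -> bool) :
  involutive (@edge d) -> involutive (smooth s) -> connect_sym (res_rel s).
Proof.
move=> eK sK; apply: sym_connect_sym => x y; rewrite /res_rel.
by apply/idP/idP => /orP[]/eqP->; rewrite ?eK ?sK eqxx ?orbT.
Qed.

Section TangleClosure.
Variables (C : finType) (n : nat) (e : tdart C n -> tdart C n).

Lemma smooth_tclosure m s (x : tdart C n) :
  @smooth (tclosure e m) s x =
  match x with inl (c, k) => inl (c, res_partner (s c) k) | inr j => inr (m j) end.
Proof.
rewrite /smooth; case: pickP => [[c k] /= /eqP <- // | noslot].
by case: x noslot => [[c k]|j] // /(_ (c, k)); rewrite /= eqxx.
Qed.

Lemma connect_sym_tclosure m s :
  involutive e -> involutive m -> connect_sym (@res_rel (tclosure e m) s).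
Proof.
move=> eK mK; apply: connect_sym_res_rel => // x.
by rewrite !smooth_tclosure; case: x => [[c k]|j] /=; rewrite ?res_partnerK ?mK.
Qed.

Lemma same_circle_tclosure_sym m s x y : involutive e -> involutive m ->
  @same_circle (tclosure e m) s x y = @same_circle (tclosure e m) s y x.
Proof. by move=> eK mK; apply: connect_sym_tclosure. Qed.

Lemma same_circle_opposite_slots m b c : involutive e -> involutive m ->
  @same_circle (tclosure e m) (fun _ => b) (inl (c, s0)) (inl (c, s2)) =
  @same_circle (tclosure e m) (fun _ => b) (inl (c, s1)) (inl (c, s3)).
Proof.
move=> eK mK; have sym := connect_sym_tclosure (fun _ => b) eK mK.
have step k : @res_rel (tclosure e m) (fun _ => b) (inl (c, k)) (inl (c, res_partner b k)).
  by rewrite /res_rel smooth_tclosure eqxx orbT.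
have [At0 At2 Af0 Af2] := res_partner_slots; rewrite /same_circle.
rewrite (same_connect1 sym (step s0)) (same_connect1r sym (step s2)).
by case: b {step sym} (sym) => sym; rewrite ?At0 ?At2 ?Af0 ?Af2 // sym.
Qed.

(* Closing with the identity leaves every endpoint a dead end: the circles of
   [tclosure e id] are the arcs and circles of the resolution inside B. *)
Lemma same_circle_tclosure_id m s x y :
  @same_circle (tclosure e id) s x y -> @same_circle (tclosure e m) s x y.
Proof.
apply: connect_sub => u v /orP[]/eqP-> {v}.
  by apply: connect1; rewrite /res_rel eqxx.
rewrite smooth_tclosure; case: u => [[c k]|j]; last exact: connect0.
by apply: connect1; rewrite /res_rel smooth_tclosure eqxx orbT.
Qed.

(* Edges pair up all darts of a circle, smoothings all its crossing darts. *)
Lemma endpoint_class_even b (j0 : 'I_(n.*2)) : involutive_fpf e ->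
  ~~ odd #|[set j | @same_circle (tclosure e id) (fun _ => b) (inr j0) (inr j)]|.
Proof.
move=> [eK e_neq]; set R := @res_rel (tclosure e id) (fun _ => b).
set K := [set y | connect R (inr j0) y].
have K_closed f : (forall y, R y (f y)) -> {in K, forall y, f y \in K}.
  by move=> Rf y; rewrite !inE => /connect_trans; apply; apply: connect1.
have R_edge y : R y (e y) by rewrite /R /res_rel eqxx.
have R_smooth y : R y (smooth (fun _ => b) y) by rewrite /R /res_rel eqxx orbT.
have smK : involutive (@smooth (tclosure e id) (fun _ => b)).
  by move=> x; rewrite !smooth_tclosure; case: x => [[c k]|j] //=; rewrite res_partnerK.
have := odd_card_involution eK (K_closed _ R_edge).
rewrite (odd_card_involution smK (K_closed _ R_smooth)).
have -> : [set x in K | e x == x] = set0.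
  by apply/setP => x; rewrite !inE (negbTE (e_neq x)) andbF.
rewrite cards0 /= => /negbT.
have -> // : [set x in K | smooth (fun _ => b) x == x] =
    inr @: [set j | @same_circle (tclosure e id) (fun _ => b) (inr j0) (inr j)].
  apply/setP => [[[c k]|j]]; rewrite inE smooth_tclosure.
    case: eqP => [[/eqP]|_]; first by rewrite (negbTE (res_partner_neq _ _)).
    by rewrite andbF; apply/esym/imsetP => -[].
  by rewrite eqxx andbT mem_imset ?inE // => ? ? [].
by rewrite card_imset // => ? ? [].
Qed.

End TangleClosure.

Definition noncrossing_on (m : nat) (N : nat -> nat) : Prop :=
  (forall i, i < m -> [/\ N i < m, N (N i) = i & N i != i]) /\
  (forall i j, i < m -> i < j < N i -> i < N j < N i).

Definition match_last (m : nat) (N : nat -> nat) (i : nat) : nat :=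
  if i == m then m.+1 else if i == m.+1 then m else N i.

Lemma match_last_low m N i : i < m -> match_last m N i = N i.
Proof. by move=> i_lt; rewrite /match_last !ifN_eq //; lia. Qed.

Lemma noncrossing_match_last m N :
  noncrossing_on m N -> noncrossing_on m.+2 (match_last m N).
Proof.
move=> [Nmatch Nnest]; have low := @match_last_low m N.
have [top0 top1] : match_last m N m = m.+1 /\ match_last m N m.+1 = m.
  by rewrite /match_last eqxx ifN_eq ?eqxx //; lia.
split=> [i i_lt | i j i_lt /andP[ij jN]].
  have [i_m|i_ge] := ltnP i m.
    by have [? ? ?] := Nmatch i i_m; rewrite !low //; split=> //; lia.
  have [->|->] : i = m \/ i = m.+1 by lia.
    by rewrite top0 top1; split => //; lia.
  by rewrite top1 top0; split => //; lia.
have [i_m|i_ge] := ltnP i m; last first.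
  move: ij jN; have [->|->] : i = m \/ i = m.+1 by lia.
    by rewrite top0; lia.
  by rewrite top1; lia.
move: jN; rewrite low // => jN; have [? ? ?] := Nmatch i i_m.
by rewrite low; [apply: Nnest; rewrite // ij | lia].
Qed.

(* For {m, m+1} forming a class of its own: the pair (N (m-1), m-1) is
   rewired into the nested pairs (N (m-1), m+1) and (m-1, m), which links the
   new class to the old ones. *)
Definition nest_last (m : nat) (N : nat -> nat) (i : nat) : nat :=
  if i == N m.-1 then m.+1 else if i == m.-1 then m
  else if i == m then m.-1 else if i == m.+1 then N m.-1 else N i.

Lemma nest_last_low m N i :
  i < m -> i != N m.-1 -> i != m.-1 -> nest_last m N i = N i.
Proof.
by move=> i_lt i_p i_q; rewrite /nest_last (negbTE i_p) (negbTE i_q) !ifN_eq //; lia.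
Qed.

Lemma nest_last_top m N : 0 < m -> N m.-1 < m -> N m.-1 != m.-1 ->
  [/\ nest_last m N (N m.-1) = m.+1, nest_last m N m.-1 = m,
      nest_last m N m = m.-1 & nest_last m N m.+1 = N m.-1].
Proof.
move=> m_gt0 p_lt p_neq.
have [m_p m_q m1_p m1_q m1_m] :
  [/\ m != N m.-1, m != m.-1, m.+1 != N m.-1, m.+1 != m.-1 & m.+1 != m] by split; lia.
rewrite /nest_last eqxx eq_sym (negbTE p_neq) eqxx (negbTE m_p) (negbTE m_q) eqxx.
by rewrite (negbTE m1_p) (negbTE m1_q) (negbTE m1_m) eqxx.
Qed.

Lemma noncrossing_nest_last m N : 0 < m ->
  noncrossing_on m N -> noncrossing_on m.+2 (nest_last m N).
Proof.
move=> m_gt0 [Nmatch Nnest]; set q := m.-1; have q_lt : q < m by lia.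
have [p_lt Np p_neq] := Nmatch q q_lt; set p := N q in p_lt Np p_neq.
have p_lt_q : p < q by lia.
have [Ep Eq Em Em1] : [/\ nest_last m N p = m.+1, nest_last m N q = m,
                         nest_last m N m = q & nest_last m N m.+1 = p].
  exact: nest_last_top.
have other i : i < m -> i != p -> i != q ->
    [/\ nest_last m N i = N i, N i < m, N i != p & N i != q].
  move=> i_lt i_p i_q; have [Ni_lt NNi _] := Nmatch i i_lt.
  split; rewrite ?nest_last_low //; apply/eqP => Ni.
    by move/eqP: i_q; apply; rewrite -NNi Ni.
  by move/eqP: i_p; apply; rewrite -NNi Ni.
split=> [i i_lt | i j i_lt /andP[ij jN]].
  have [->|i_p] := eqVneq i p; first by rewrite Ep Em1; split; lia.
  have [->|i_q] := eqVneq i q; first by rewrite Eq Em; split; lia.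
  have [->|i_m] := eqVneq i m; first by rewrite Em Eq; split; lia.
  have [->|i_m1] := eqVneq i m.+1; first by rewrite Em1 Ep; split; lia.
  have i_m' : i < m by lia.
  have [Ei Ni_lt Ni_p Ni_q] := other i i_m' i_p i_q.
  have [_ NNi Ni_i] := Nmatch i i_m'.
  by have [ENi _ _ _] := other _ Ni_lt Ni_p Ni_q; rewrite Ei ENi NNi; split=> //; lia.
have [ei|i_p] := eqVneq i p.
  rewrite ei Ep in ij jN *.
  have [->|j_q] := eqVneq j q; first by rewrite Eq; lia.
  have [->|j_m] := eqVneq j m; first by rewrite Em; lia.
  have j_q' : j < q by lia.
  have [Ej _ _ _] := other j ltac:(lia) ltac:(lia) j_q.
  by have := Nnest p j p_lt; rewrite Np Ej ij j_q' => /(_ isT); lia.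
have [ei|i_q] := eqVneq i q; first by move: jN; rewrite ei Eq; lia.
have [ei|i_m] := eqVneq i m; first by move: jN; rewrite ei Em; lia.
have [ei|i_m1] := eqVneq i m.+1; first by move: jN; rewrite ei Em1; lia.
have i_m' : i < m by lia.
have [Ei Ni_lt Ni_p Ni_q] := other i i_m' i_p i_q.
rewrite Ei in jN *; have Ni_q' : N i < q by lia.
have j_p : j != p.
  apply/eqP => ej; have := Nnest i p i_m'; rewrite -ej ij jN ej Np => /(_ isT); lia.
have [Ej _ _ _] := other j ltac:(lia) j_p ltac:(lia).
by rewrite Ej; apply: Nnest; rewrite // ij.
Qed.

Lemma count_iota_last2 (P : pred nat) a :
  count P (iota 0 a.+2) = count P (iota 0 a) + P a + P a.+1.
Proof. by rewrite -addn2 iotaD count_cat /= add0n addn0 addnA. Qed.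

Section NoncrossingConnector.
Variables (T : eqType) (U : Type).
Implicit Types (f : nat -> T) (N : nat -> nat) (h : nat -> U).

Definition even_classes m f :=
  forall i, i < m -> ~~ odd (count (fun j => f j == f i) (iota 0 m)).

(* The equivalence on [0, m) generated by the level sets of f and the pairs
   {x, N x} has a single class. *)
Definition connects m f N := forall h,
  (forall x y, x < m -> y < m -> f x = f y -> h x = h y) ->
  (forall x, x < m -> h (N x) = h x) ->
  forall x, x < m -> h x = h 0.

Definition last_pair_class a f : pred nat :=
  predU (fun j => f j == f a) (fun j => f j == f a.+1).

Definition merge_last a f j := if last_pair_class a f j then f a else f j.

Lemma count_off_last_pair a f i : ~~ last_pair_class a f i ->
  count (fun j => f j == f i) (iota 0 a.+2) = count (fun j => f j == f i) (iota 0 a).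
Proof.
case/norP=> fa fa1.
by rewrite count_iota_last2 eq_sym (negbTE fa) eq_sym (negbTE fa1) !addn0.
Qed.

Lemma even_classes_merge a f : even_classes a.+2 f -> even_classes a (merge_last a f).
Proof.
move=> f_even; set M := last_pair_class a f.
have even_a := f_even a (leqW (ltnSn a)); have even_a1 := f_even a.+1 (ltnSn a.+1).
have Ma : M a by rewrite /M /last_pair_class /= eqxx.
have Ma1 : M a.+1 by rewrite /M /last_pair_class /= eqxx orbT.
have M_even : ~~ odd (count M (iota 0 a.+2)).
  have [fa1|fa1] := eqVneq (f a) (f a.+1).
    rewrite (@eq_count _ M (fun j => f j == f a.+1)) => [//|j].
    by rewrite /M /last_pair_class /= fa1 orbb.
  have := count_predUI (fun j => f j == f a) (fun j => f j == f a.+1) (iota 0 a.+2).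
  rewrite (@eq_count _ (predI _ _) pred0) ?count_pred0 ?addn0 => [->|j /=].
    by rewrite oddD (negbTE even_a) (negbTE even_a1).
  by case: (f j =P f a) => // ->; rewrite (negbTE fa1).
move=> i i_lt; set g := merge_last a f.
have gE j : (g j == g i) = if M i then M j else f j == f i.
  rewrite /g /merge_last -/M; case: (boolP (M i)) => Mi; case: (boolP (M j)) => Mj //=.
  - by rewrite eqxx.
  - by case/norP: Mj => /negbTE.
  case/norP: Mi => fia fia1; rewrite eq_sym (negbTE fia).
  by case/orP: Mj => /eqP ->; rewrite eq_sym ?(negbTE fia) ?(negbTE fia1).
rewrite (eq_count gE); case: (boolP (M i)) => Mi.
  by move: M_even; rewrite count_iota_last2 Ma Ma1 -addnA oddD addbF.
by rewrite -count_off_last_pair //; apply: f_even; lia.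
Qed.

Lemma even_classes_isolated_last a f : even_classes a.+2 f ->
  (forall x, x < a -> ~~ last_pair_class a f x) -> f a.+1 = f a /\ even_classes a f.
Proof.
move=> f_even isolated; split=> [|i i_lt].
  have := f_even a (leqW (ltnSn a)); rewrite count_iota_last2 eqxx.
  rewrite (@eq_in_count _ _ pred0) ?count_pred0 => [|j /[!mem_iota] /= j_lt].
    by case: eqP.
  by case/norP: (isolated j j_lt) => /negbTE.
by rewrite -count_off_last_pair ?isolated //; apply: f_even; lia.
Qed.

Lemma connects_match_last a f N :
  (a = 0 \/ exists2 x, x < a & last_pair_class a f x) ->
  connects a (merge_last a f) N -> connects a.+2 f (match_last a N).
Proof.
move=> a0_or_join N_conn h h_f h_N; set M := last_pair_class a f.
have h_a1 : h a.+1 = h a.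
  by have := h_N a (leqW (ltnSn a)); rewrite /match_last eqxx.
have hM x : x < a.+2 -> M x -> h x = h a.
  move=> x_lt /orP[]/eqP fx; first by apply: h_f => //; lia.
  by rewrite -h_a1; apply: h_f.
have low x : x < a -> h x = h 0.
  apply: N_conn => [y z y_lt z_lt | y y_lt].
    rewrite /merge_last -/M; case: (boolP (M y)) => My; case: (boolP (M z)) => Mz.
    - by rewrite (hM y) ?(hM z) //; lia.
    - by move=> fzy; case/norP: Mz; rewrite -fzy eqxx ?orbT.
    - by move=> fzy; case/norP: My; rewrite fzy eqxx ?orbT.
    - by move=> fyz; apply: h_f => //; lia.
  by rewrite -(match_last_low N y_lt); apply: h_N; lia.
have h_a : h a = h 0.
  case: a0_or_join => [->//|[x0 x0_lt Mx0]].
  by rewrite -(hM x0) ?low //; lia.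
move=> x x_lt; have [x_a|x_ge] := ltnP x a; first exact: low.
have [->|->] : x = a \/ x = a.+1 by lia.
  exact: h_a.
by rewrite h_a1.
Qed.

Lemma connects_nest_last a f N : 0 < a -> noncrossing_on a N -> f a.+1 = f a ->
  connects a f N -> connects a.+2 f (nest_last a N).
Proof.
move=> a_gt0 N_nc fa1 N_conn h h_f h_N; set q := a.-1; set p := N q.
have q_lt : q < a by lia.
have [p_lt Np p_neq] := N_nc.1 q q_lt.
have [Ep Eq _ _] := nest_last_top a_gt0 p_lt p_neq.
have h_q : h q = h a by rewrite -Eq h_N //; apply: leqW (leqW q_lt).
have h_p : h p = h a.+1 by rewrite -Ep h_N //; apply: leqW (leqW p_lt).
have h_a1 : h a.+1 = h a by apply: h_f => //; lia.
have low x : x < a -> h x = h 0.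
  apply: N_conn => [y z y_lt z_lt fyz | y y_lt]; first by apply: h_f => //; lia.
  have [->|y_p] := eqVneq y p; first by rewrite Np h_q h_p h_a1.
  have [->|y_q] := eqVneq y q; first by rewrite h_q h_p h_a1.
  by rewrite -(nest_last_low y_lt y_p y_q); apply: h_N; lia.
move=> x x_lt; have [x_a|x_ge] := ltnP x a; first exact: low.
have [->|->] : x = a \/ x = a.+1 by lia.
  by rewrite -h_q low.
by rewrite h_a1 -h_q low.
Qed.

Lemma exists_noncrossing_connector k f : even_classes k.*2 f ->
  exists N, noncrossing_on k.*2 N /\ connects k.*2 f N.
Proof.
elim: k f => [|k IH] f f_even; first by exists id.
rewrite doubleS in f_even *; set a := k.*2 in f_even *.
case: (boolP ((a == 0) || has (last_pair_class a f) (iota 0 a))) => [join|].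
  have [N [N_nc N_conn]] := IH _ (even_classes_merge f_even).
  exists (match_last a N); split; first exact: noncrossing_match_last.
  apply: connects_match_last N_conn.
  by case/orP: join => [/eqP a0 | /hasP[x /[!mem_iota] /= x_lt Mx]]; [left | right; exists x].
case/norP=> a_neq0 /hasPn isolated.
have [fa1 f_even'] : f a.+1 = f a /\ even_classes a f.
  by apply: even_classes_isolated_last => // x x_lt; apply: isolated; rewrite mem_iota.
have [N [N_nc N_conn]] := IH _ f_even'.
exists (nest_last a N); split; first by apply: noncrossing_nest_last => //; lia.
by apply: connects_nest_last => //; lia.
Qed.

End NoncrossingConnector.

Section OrdinalMatching.
Variables (n : nat) (N : nat -> nat).
Hypothesis N_nc : noncrossing_on n.*2 N.

Definition ord_matching (j : 'I_(n.*2)) : 'I_(n.*2) := insubd j (N j).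

Lemma val_ord_matching j : val (ord_matching j) = N j.
Proof. by rewrite val_insubd; case: (N_nc.1 j (ltn_ord j)) => ->. Qed.

Lemma noncrossing_ord_matching : noncrossing_matching ord_matching.
Proof.
have [N_match N_nest] := N_nc.
split; last by move=> i j; rewrite !val_ord_matching; apply: N_nest.
split=> j; first by apply/val_inj; rewrite !val_ord_matching; case: (N_match j (ltn_ord j)).
by rewrite -(inj_eq val_inj) val_ord_matching; case: (N_match j (ltn_ord j)).
Qed.

End OrdinalMatching.

Lemma exists_matching_joining_endpoints (C : finType) n (e : tdart C n -> tdart C n) b :
  involutive_fpf e -> exists m, noncrossing_matching m /\
    forall j j', @same_circle (tclosure e m) (fun _ => b) (inr j) (inr j').
Proof.
move=> e_fpf; have eK := e_fpf.1; set R := @res_rel (tclosure e id) (fun _ => b).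
have R_sym : connect_sym R by apply: connect_sym_tclosure.
pose f i := omap (fun j => root R (inr j)) (insub i : option 'I_(n.*2)).
have f_eq (i j : 'I_(n.*2)) : (f i == f j) = connect R (inr i) (inr j).
  by rewrite /f !valK /= (inj_eq (@Some_inj _)); exact: (sameP eqP (rootP R_sym)).
have f_even : even_classes n.*2 f.
  move=> i i_lt; have := endpoint_class_even b (Ordinal i_lt) e_fpf.
  rewrite -val_enum_ord count_map cardE size_filter enumT.
  by congr (~~ odd _); apply: eq_count => j; rewrite /= inE /same_circle -/R -f_eq eq_sym.
have [N [N_nc N_conn]] := exists_noncrossing_connector (tdart C n) f_even.
have [[mK _] _] := noncrossing_ord_matching N_nc.
exists (ord_matching N); split=> [|j j']; first exact: noncrossing_ord_matching.
set S := @res_rel (tclosure e (ord_matching N)) (fun _ => b).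
have S_sym : connect_sym S by apply: connect_sym_tclosure.
pose h i := root S (inr (insubd j i)).
have hE (i : 'I_(n.*2)) : h i = root S (inr i) by rewrite /h valKd.
have h0 : forall x, x < n.*2 -> h x = h 0.
  apply: N_conn => [x y x_lt y_lt | x x_lt].
    rewrite -[x]/(val (Ordinal x_lt)) -[y]/(val (Ordinal y_lt)) !hE => /eqP.
    by rewrite f_eq => /(same_circle_tclosure_id _)/(rootP S_sym).
  rewrite -[x]/(val (Ordinal x_lt)) -(val_ord_matching N_nc) !hE.
  apply/esym/(rootP S_sym)/connect1.
  by rewrite /S /res_rel smooth_tclosure eqxx orbT.
by apply/(rootP S_sym); rewrite -!hE !h0.
Qed.

Section MirrorDouble.
Variables (C : finType) (n : nat) (e : tdart C n -> tdart C n).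

Lemma smooth_LT s (x : dart (LT e)) :
  @smooth (LT e) s x =
  match x with
  | inl (inl (c, k)) => inl (inl (c, res_partner (s (inl c)) k))
  | inr (inl (c, k)) => inr (inl (c, res_partner (~~ s (inr c)) k))
  | inl (inr j) => inr (inr j)
  | inr (inr j) => inl (inr j)
  end.
Proof.
rewrite /smooth; case: pickP => [[[c|c] k] /= /eqP <- // | noslot].
  by rewrite neg4_res_partner.
case: x noslot => [[[c k]|j]|[[c k]|j]] // noslot.
  by have := noslot (inl c, k); rewrite /= eqxx.
by have := noslot (inr c, neg4 k); rewrite /= neg4K eqxx.
Qed.

Definition swap_sides (T : Type) (z : T + T) : T + T :=
  match z with inl x => inr x | inr x => inl x end.

Lemma same_circle_LT_swap s x y : @same_circle (LT e) s x y ->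
  @same_circle (LT e) (fun c => ~~ s (swap_sides c)) (swap_sides x) (swap_sides y).
Proof.
apply: connect_homo => u v /orP[]/eqP-> {v}; apply: connect1; rewrite /res_rel !smooth_LT.
  by case: u => [[[c k]|j]|[[c k]|j]]; rewrite /= eqxx.
by case: u => [[[c k]|j]|[[c k]|j]]; rewrite /= ?negbK eqxx ?orbT.
Qed.

Lemma same_circle_LT_inl m s x y :
  (forall j j', @same_circle (tclosure e m) (fun c => s (inl c)) (inr j) (inr j')) ->
  @same_circle (LT e) s (inl x) (inl y) ->
  @same_circle (tclosure e m) (fun c => s (inl c)) x y.
Proof.
move=> endpoints_joined.
pose hub := if [pick j : 'I_(n.*2)] is Some j then inr j else x.
have hubP j : @same_circle (tclosure e m) (fun c => s (inl c)) (inr j) hub /\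
              @same_circle (tclosure e m) (fun c => s (inl c)) hub (inr j).
  by rewrite /hub; case: pickP => [j0 _|/(_ j) //]; split; apply: endpoints_joined.
(* The mirror half is collapsed onto the circle through all endpoints. *)
pose proj (z : dart (LT e)) := if z is inl w then w else hub.
apply: (connect_homo (f := proj)) => u v /orP[]/eqP-> {v}.
  by case: u => [w|w]; [apply: connect1; rewrite /res_rel eqxx | exact: connect0].
rewrite smooth_LT; case: u => [[[c k]|j]|[[c k]|j]] /=.
- by apply: connect1; rewrite /res_rel smooth_tclosure eqxx orbT.
- exact: (hubP j).1.
- exact: connect0.
- exact: (hubP j).2.
Qed.

End MirrorDouble.

Theorem mainTheorem1 (n : nat) (C : finType) (e : tdart C n -> tdart C n) :
  tangle_diagram e -> tangle_adequate e -> adequate (LT e).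
Proof.
case=> e_fpf _ _ T_adequate; have eK := e_fpf.1.
have [mA [mA_nc joinedA]] := exists_matching_joining_endpoints true e_fpf.
have [mAi [mAi_nc joinedAi]] := exists_matching_joining_endpoints false e_fpf.
have [[[mA_K _] _] [[mAi_K _] _]] := (mA_nc, mAi_nc).
have [A_adequate _] := T_adequate mA mA_nc.
have [_ Ai_adequate] := T_adequate mAi mAi_nc.
have [neg0 neg1 neg2 neg3] := neg4_slots.
split=> -[c|c]; apply/negP.
- by move/(same_circle_LT_inl joinedA); apply/negP/A_adequate.
- rewrite /= neg0 neg2 => /same_circle_LT_swap /(same_circle_LT_inl joinedAi).
  by rewrite same_circle_opposite_slots //; apply/negP/Ai_adequate.
- by move/(same_circle_LT_inl joinedAi); apply/negP/Ai_adequate.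
- rewrite /= neg1 neg3 => /same_circle_LT_swap /(same_circle_LT_inl joinedA).
  by rewrite same_circle_tclosure_sym // -same_circle_opposite_slots //; apply/negP/A_adequate.
Qed.
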